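(* Let $G=(V,E)$ be a finite connected simple undirected graph with root $e\in V$, and let $k\ge1$ be such that the distance $k$-graph $G^{[k]}$ is non-trivial. Let $N\ge1$ and let $(G^{\star N})^{[k]}$ be the distance $k$-graph of the $N$-fold star power $G^{\star N}$. Then there is a graph $\hat G$ on the vertex set of $G^{\star N}$ such that $$(G^{\star N})^{[k]}=(G^{[k]})^{\star N}\cup\hat G,$$ i.e. the edge set of $(G^{\star N})^{[k]}$ is the union of the edge set of $(G^{[k]})^{\star N}$ (the $N$-fold star power of the rooted graph $(G^{[k]},e)$) and the edge set of $\hat G$, and every vertex $z$ of $\hat G$ (incident to one of its edges) satisfies $\partial_{G^{\star N}}(z,e)<k$.
   Context: All graphs are simple and undirected; $\partial_H$ denotes graph distance in $H$. For a graph $H=(W,F)$ and $k\ge1$, the distance $k$-graph $H^{[k]}$ is the graph on $W$ with edges the pairs $(x,y)$ with $\partial_H(x,y)=k$. For rooted graphs $(G_1,o_1)$, $(G_2,o_2)$ the star product $G_1\star G_2$ has vertex set $V_1\times V_2$, with $(v_1,w_1)\sim(v_2,w_2)$ iff either $v_1=v_2=o_1$ and $w_1\sim w_2$, or $v_1\sim v_2$ and $w_1=w_2=o_2$; it is rooted at $(o_1,o_2)$. The $N$-fold star power $G^{\star N}$ is (on the component of the root) the graph obtained from $N$ disjoint copies of $G$ by identifying their roots into one vertex $e$; $(G^{[k]})^{\star N}$ is formed in the same way from $N$ copies of $G^{[k]}$ rooted at $e$, on the same vertex set. *)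

From mathcomp Require Import all_boot.
Set Implicit Arguments. Unset Strict Implicit. Unset Printing Implicit Defensive.

Inductive walk {T : Type} (r : T -> T -> Prop) : nat -> T -> T -> Prop :=
| walk0 x : walk r 0 x x
| walkS n x y z : r x y -> walk r n y z -> walk r n.+1 x z.

Definition is_dist {T : Type} (r : T -> T -> Prop) (x y : T) (d : nat) : Prop :=
  walk r d x y /\ (forall m, walk r m x y -> d <= m).

Definition distk {T : Type} (r : T -> T -> Prop) (k : nat) : T -> T -> Prop :=
  fun x y => is_dist r x y k.

(* Vertex set of the N-fold star power of a graph on V rooted at e:
   N copies of V glued at their roots.  None is the common root e;
   Some (i, v) (v <> e) is the vertex v of the i-th copy. *)
Definition starV (V : finType) (N : nat) (e : V) :=
  option {p : 'I_N * V | p.2 != e}.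

Definition emb {V : finType} {N : nat} {e : V} (i : 'I_N) (v : V) : starV N e :=
  insub (i, v).

Definition star_root (V : finType) (N : nat) (e : V) : starV N e := None.

Definition star_pow (V : finType) (N : nat) (e : V) (r : V -> V -> Prop)
  : starV N e -> starV N e -> Prop :=
  fun x y => exists (i : 'I_N) (u v : V), x = @emb V N e i u /\ y = @emb V N e i v /\ r u v.

Arguments starV : clear implicits.
Arguments star_root : clear implicits.
Arguments star_pow : clear implicits.

(** A vertex of the star power lies on one copy of [G], and the only way
    between different copies is through the root.  Hence two vertices on a
    common copy (root included) have the same distance in [G^{*N}] as in [G],
    and their distance-[k] edges are exactly those of [(G^[k])^{*N}].  The
    remaining distance-[k] edges, which form [Ghat], join vertices on
    different copies; a shortest path between them passes through the root
    strictly before its end, so both endpoints are at distance [< k] from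
    the root. *)

From Stdlib Require Import Classical.
From mathcomp Require Import all_boot.
Set Implicit Arguments. Unset Strict Implicit. Unset Printing Implicit Defensive.

Section Walks.
Variables (T : Type) (r : T -> T -> Prop).

Lemma walk_rcons n x y z : walk r n x y -> r y z -> walk r n.+1 x z.
Proof.
elim=> [a|m a b c hab _ IH] hyz; last exact: walkS hab (IH hyz).
exact: walkS hyz (walk0 r z).
Qed.

Hypothesis r_sym : forall a b, r a b -> r b a.

Lemma walk_sym n x y : walk r n x y -> walk r n y x.
Proof. by elim=> [a|m a b c hab _ IH]; [exact: walk0 | exact: walk_rcons IH (r_sym hab)]. Qed.

Lemma is_dist_sym x y d : is_dist r x y d -> is_dist r y x d.
Proof. by case=> hw hmin; split=> [|m /walk_sym]; [exact: walk_sym | exact: hmin]. Qed.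

End Walks.

Lemma is_dist_refl T (r : T -> T -> Prop) x d : is_dist r x x d -> d = 0.
Proof. by case=> _ /(_ 0 (walk0 r x)); rewrite leqn0 => /eqP. Qed.

(* Classical: minimality of a walk length is not decidable for a Prop relation. *)
Lemma is_dist_le_walk T (r : T -> T -> Prop) n x y :
  walk r n x y -> exists2 d, is_dist r x y d & d <= n.
Proof.
elim: n {-2}n (leqnn n) => [|b IH] n hnb hw.
  by move: hnb hw; rewrite leqn0 => /eqP ->; exists 0.
have [[m ltmn hwm]|shortest] := classic (exists2 m, m < n & walk r m x y); last first.
  exists n => //; split=> // m hwm; rewrite leqNgt; apply/negP => ltmn.
  by apply: shortest; exists m.
have [d hd ledm] := IH m (leq_trans ltmn hnb) hwm.
by exists d => //; exact: leq_trans ledm (ltnW ltmn).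
Qed.

Section StarPower.
Variables (V : finType) (N : nat) (e : V).
Local Notation SV := (starV V N e).
Local Notation root := (star_root V N e).
Local Notation star r := (star_pow V N e r).
Local Notation emb := (@emb V N e).

(* The copy-[i] coordinate: vertices of other copies are sent to the root [e]. *)
Definition star_proj (i : 'I_N) (x : SV) : V :=
  if x is Some s then (if (val s).1 == i then (val s).2 else e) else e.

Definition in_copy (i : 'I_N) (x : SV) : bool :=
  if x is Some s then (val s).1 == i else false.

Definition on_copy (i : 'I_N) (x : SV) : bool := (x == root) || in_copy i x.

Lemma emb_root i : emb i e = root.
Proof. by rewrite /emb insubF //= eqxx. Qed.

Lemma emb_neq_root i u (hu : u != e) : emb i u = Some (exist _ (i, u) hu).
Proof. by rewrite /emb (insubT (fun p : 'I_N * V => p.2 != e) (hu : (i, u).2 != e)). Qed.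

Lemma star_proj_emb i u : star_proj i (emb i u) = u.
Proof. by case: (eqVneq u e) => [->|hu]; rewrite ?emb_root // emb_neq_root /= eqxx. Qed.

Lemma star_proj_emb_other i l u : l != i -> star_proj i (emb l u) = e.
Proof.
by move=> hl; case: (eqVneq u e) => [->|hu]; rewrite ?emb_root // emb_neq_root /= (negbTE hl).
Qed.

Lemma on_copy_emb l u : on_copy l (emb l u).
Proof.
by case: (eqVneq u e) => [->|hu]; rewrite /on_copy ?emb_root // emb_neq_root /= eqxx ?orbT.
Qed.

Lemma emb_star_proj i x : on_copy i x -> x = emb i (star_proj i x).
Proof.
case: x => [[[j u] hu]|] /=; last by rewrite emb_root.
by rewrite /on_copy /= => /eqP ej; subst j; rewrite eqxx emb_neq_root.
Qed.

Lemma in_copy_uniq i l x : in_copy i x -> in_copy l x -> i = l.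
Proof. by case: x => [s|] //= /eqP <- /eqP. Qed.

Lemma star_pow_sym (r : V -> V -> Prop) :
  (forall a b, r a b -> r b a) -> forall x y, star r x y -> star r y x.
Proof. by move=> r_sym x y [i [u [v [-> [-> huv]]]]]; exists i, v, u; auto. Qed.

Lemma star_pow_on_copy (r : V -> V -> Prop) x y :
  star r x y -> exists l, on_copy l x /\ on_copy l y.
Proof. by case=> l [u [v [-> [-> _]]]]; exists l; rewrite !on_copy_emb. Qed.

Lemma walk_star_emb (r : V -> V -> Prop) i n u v :
  walk r n u v -> walk (star r) n (emb i u) (emb i v).
Proof.
elim=> [a|m a b c hab _ IH]; first exact: walk0.
by apply: walkS IH; exists i, a, b.
Qed.

(* Projecting onto copy [i] collapses the steps taken in other copies. *)
Lemma walk_star_proj (r : V -> V -> Prop) i n x y :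
  walk (star r) n x y -> exists2 m, m <= n & walk r m (star_proj i x) (star_proj i y).
Proof.
elim=> [a|m a b c hab _ [m' lem' hw]]; first by exists 0; last exact: walk0.
case: hab hw => l [u [v [-> [-> huv]]]] hw.
have [el|nel] := eqVneq l i.
  subst l; exists m'.+1; rewrite // star_proj_emb.
  by apply: walkS huv _; rewrite star_proj_emb in hw.
exists m'; first exact: leqW.
by rewrite (star_proj_emb_other _ nel) -(star_proj_emb_other v nel).
Qed.

Lemma is_dist_star_emb (r : V -> V -> Prop) i u v d :
  is_dist (star r) (emb i u) (emb i v) d <-> is_dist r u v d.
Proof.
split=> [[hw hmin]|[hw hmin]].
  have [m ledm] := walk_star_proj i hw; rewrite !star_proj_emb => hwm.
  have edm : d = m by apply/eqP; rewrite eqn_leq ledm hmin //; exact: walk_star_emb.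
  by split=> [|m2 /(walk_star_emb i)]; [rewrite edm | exact: hmin].
split=> [|m /(walk_star_proj i) [m2 lem2]]; first exact: walk_star_emb.
by rewrite !star_proj_emb => /hmin /leq_trans; apply.
Qed.

Lemma distk_star_on_copy (r : V -> V -> Prop) k i x y :
  on_copy i x -> on_copy i y -> distk (star r) k x y -> star (distk r k) x y.
Proof.
move=> /emb_star_proj ex /emb_star_proj ey; rewrite ex ey => /is_dist_star_emb hd.
by exists i, (star_proj i x), (star_proj i y).
Qed.

Lemma walk_star_exit (r : V -> V -> Prop) i n x y : walk (star r) n x y ->
  in_copy i x -> ~~ on_copy i y -> exists2 a, a < n & walk (star r) a x root.
Proof.
elim=> [a|m a b c hab hbc IH] hia; first by rewrite /on_copy hia orbT.
have [l [hal hbl]] := star_pow_on_copy hab.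
have el : l = i.
  by case/orP: hal => [/eqP ea|/in_copy_uniq]; [move: hia; rewrite ea | apply].
subst l; move: hbl; rewrite /on_copy; case: eqP => [eb _ hc|_ /= hib hc].
  subst b; exists 1; last exact: walkS hab (walk0 _ _).
  by case: m hbc {IH} => // hbc; inversion hbc; subst; move: hc; rewrite /on_copy eqxx.
by have [a' lta' hwa'] := IH hib hc; exists a'.+1; last exact: walkS hab hwa'.
Qed.

Definition star_distk_extra (r : V -> V -> Prop) (k : nat) (x y : SV) : Prop :=
  distk (star r) k x y /\ ~ star (distk r k) x y.

Lemma star_distk_extra_near_root (r : V -> V -> Prop) k x y : 0 < k ->
  star_distk_extra r k x y -> exists d, is_dist (star r) x root d /\ d < k.
Proof.
move=> k_gt0 [hd hnot]; case: x hd hnot => [s|] hd hnot; last first.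
  by exists 0; split=> //; split=> [|m _]; first exact: walk0.
pose i := (val s).1.
have hxi : in_copy i (Some s) by rewrite /= eqxx.
have hyi : ~~ on_copy i y.
  apply: contra_notN hnot => hyi.
  by apply: (@distk_star_on_copy r k i) hd; rewrite // /on_copy hxi orbT.
have [a ltak hwa] := walk_star_exit hd.1 hxi hyi.
have [d hd' leda] := is_dist_le_walk hwa.
by exists d; split; last exact: leq_ltn_trans leda ltak.
Qed.

End StarPower.

Theorem lemma4p1 (V : finType) (g : rel V) (e : V) (k N : nat)
  (gsym : symmetric g) (girr : irreflexive g)
  (gconn : forall x y : V, exists n, walk g n x y)
  (hk : 1 <= k)
  (hnontriv : exists x y : V, distk g k x y)
  (hN : 1 <= N) :
  exists Ghat : starV V N e -> starV V N e -> Prop,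
    (forall x y, Ghat x y -> Ghat y x) /\ (forall x, ~ Ghat x x) /\
    (forall x y, distk (star_pow V N e g) k x y <->
                 (star_pow V N e (distk g k) x y \/ Ghat x y)) /\
    (forall z, (exists w, Ghat z w) ->
       exists d, is_dist (star_pow V N e g) z (star_root V N e) d /\ d < k).
Proof.
have g_sym : forall a b, g a b -> g b a by move=> a b; rewrite gsym.
have star_g_sym := @star_pow_sym V N e _ g_sym.
have star_distk_sym := @star_pow_sym V N e _ (fun a b => @is_dist_sym _ _ g_sym a b k).
exists (star_distk_extra g k); split; [|split; [|split]].
- move=> x y [hd hnot]; split; first exact: (is_dist_sym star_g_sym hd).
  by move=> hyx; apply: hnot; exact: star_distk_sym hyx.
- by move=> x [hxx _]; move: hk; rewrite (is_dist_refl hxx).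
- move=> x y; split=> [hd|[[i [u [v [-> [-> huv]]]]]|[]//]].
    by have [|] := classic (star_pow V N e (distk g k) x y); [left | right].
  exact/is_dist_star_emb.
- by move=> z [w /star_distk_extra_near_root]; apply.
Qed.
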